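(* Let $u,v>0$ and $0<a\le 1$, and consider the map $(x,y)\mapsto\big((1-a)x+auy(1-y),\ (1-a)y+avx(1-x)\big)$ (Kopel's map with $b=a$). Define $R_1=u^2v^2-4u^2v-4uv^2+18uv-27$ and $H_3=a^3u^3v^3-4a^3u^3v^2-4a^3u^2v^3+17a^3u^2v^2+4a^3u^2v+4a^3uv^2-2a^2u^2v^2-45a^3uv+8a^2u^2v+8a^2uv^2-36a^2uv+27a^3-4auv+54a^2+36a+8$. If either ($uv>1$, $R_1<0$, $H_3>0$) or ($uv>1$, $R_1>0$, $H_3<0$), then the map has exactly one locally stable positive equilibrium.
   Context: An equilibrium is a real fixed point $(x^*,y^* )$; it is positive if $x^*,y^*>0$. It is called (locally) stable if both eigenvalues of the Jacobian $\begin{pmatrix}1-a & ua(1-2y^* )\\ va(1-2x^* ) & 1-a\end{pmatrix}$ at it have modulus less than $1$, equivalently the Jury conditions $1-\mathrm{Tr}(J)+\mathrm{Det}(J)>0$, $1+\mathrm{Tr}(J)+\mathrm{Det}(J)>0$, $1-\mathrm{Det}(J)>0$ hold. *)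

From Stdlib Require Import Reals.
Open Scope R_scope.

Definition kopel (u v a : R) (p : R * R) : R * R :=
  let (x, y) := p in
  ((1 - a) * x + a * u * y * (1 - y), (1 - a) * y + a * v * x * (1 - x)).

Definition is_equilibrium (u v a x y : R) : Prop :=
  kopel u v a (x, y) = (x, y).

Definition is_positive_equilibrium (u v a x y : R) : Prop :=
  is_equilibrium u v a x y /\ 0 < x /\ 0 < y.

Definition J11 (u v a x y : R) : R := 1 - a.
Definition J12 (u v a x y : R) : R := u * a * (1 - 2 * y).
Definition J21 (u v a x y : R) : R := v * a * (1 - 2 * x).
Definition J22 (u v a x y : R) : R := 1 - a.

Definition trJ (u v a x y : R) : R := J11 u v a x y + J22 u v a x y.
Definition detJ (u v a x y : R) : R :=
  J11 u v a x y * J22 u v a x y - J12 u v a x y * J21 u v a x y.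

(* Local stability via the Jury conditions (equivalent, for a real 2x2
   matrix, to both eigenvalues having modulus < 1). *)
Definition locally_stable (u v a x y : R) : Prop :=
  1 - trJ u v a x y + detJ u v a x y > 0 /\
  1 + trJ u v a x y + detJ u v a x y > 0 /\
  1 - detJ u v a x y > 0.

Definition R1poly (u v : R) : R :=
  u^2*v^2 - 4*u^2*v - 4*u*v^2 + 18*u*v - 27.

Definition H3poly (u v a : R) : R :=
  a^3*u^3*v^3 - 4*a^3*u^3*v^2 - 4*a^3*u^2*v^3 + 17*a^3*u^2*v^2
  + 4*a^3*u^2*v + 4*a^3*u*v^2 - 2*a^2*u^2*v^2 - 45*a^3*u*v
  + 8*a^2*u^2*v + 8*a^2*u*v^2 - 36*a^2*u*v + 27*a^3 - 4*a*u*v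
  + 54*a^2 + 36*a + 8.

From Stdlib Require Import Reals Lra Psatz.
Open Scope R_scope.

(* Positive equilibria are the points (u y (1 - y), y) with y a root of the cubic
   G(y) = u v (1 - y) (1 - u y (1 - y)) - 1, whose real roots all lie in (0, 1) when
   u v > 1.  At such a root the Jury conditions reduce to G'(y) < 0 and
   2 + a y G'(y) > 0, the remaining one being automatic for a <= 1.  Up to the factor
   u^4 v^2, R1 is the discriminant of G, and H3 is the product of 2 + a y G'(y) over
   the three complex roots of G.
   If R1 < 0, G has a single real root y0 and G'(y0) < 0; the two other factors of H3
   are complex conjugate, so H3 > 0 forces stability at y0.
   If R1 > 0, G has three simple real roots and G' is positive at exactly one of them,
   where 2 + a y G'(y) > 0 trivially; H3 < 0 then leaves exactly one stable root
   among the other two. *)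

Lemma quadratic_form_nonpos (A B C s t : R) :
  A < 0 -> B^2 - 4*A*C < 0 -> A*s^2 + B*s*t + C*t^2 <= 0.
Proof.
intros HA Hd.
assert (E : 4*A*(A*s^2 + B*s*t + C*t^2) = (2*A*s + B*t)^2 - (B^2 - 4*A*C)*t^2) by ring.
assert (0 <= (2*A*s + B*t)^2) by apply pow2_ge_0.
assert (0 <= t^2) by apply pow2_ge_0.
nra.
Qed.

Lemma quadratic_neg (A B C y : R) :
  A < 0 -> B^2 - 4*A*C < 0 -> A*y^2 + B*y + C < 0.
Proof.
intros HA Hd.
assert (E : 4*A*(A*y^2 + B*y + C) = (2*A*y + B)^2 - (B^2 - 4*A*C)) by ring.
assert (0 <= (2*A*y + B)^2) by apply pow2_ge_0.
nra.
Qed.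

Lemma quadratic_root_exists (A B C : R) :
  A <> 0 -> 0 <= B^2 - 4*A*C -> exists r, A*r^2 + B*r + C = 0.
Proof.
intros HA Hd.
set (r := (- B + sqrt (B^2 - 4*A*C)) / (2*A)).
assert (Hr : 2*A*r + B = sqrt (B^2 - 4*A*C)) by (unfold r; field; exact HA).
assert (Hs := sqrt_sqrt _ Hd).
exists r.
apply (Rmult_eq_reg_l (4*A)); [|lra].
replace (4*A*(A*r^2 + B*r + C)) with ((2*A*r + B)^2 - (B^2 - 4*A*C)) by ring.
rewrite Hr. lra.
Qed.

Definition cubic_discriminant (c3 c2 c1 c0 : R) : R :=
  18*c3*c2*c1*c0 - 4*c2^3*c0 + c2^2*c1^2 - 4*c3*c1^3 - 27*c3^2*c0^2.

Lemma cubic_discriminant_deflate (q2 q1 q0 y0 : R) :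
  cubic_discriminant q2 (q1 - y0*q2) (q0 - y0*q1) (- (y0*q0)) =
  (q1^2 - 4*q2*q0) * (q2*y0^2 + q1*y0 + q0)^2.
Proof. unfold cubic_discriminant. ring. Qed.

Lemma cubic_discriminant_roots (c y1 y2 y3 : R) :
  cubic_discriminant c (- c*(y1 + y2 + y3)) (c*(y1*y2 + y1*y3 + y2*y3)) (- c*(y1*y2*y3)) =
  c^4 * ((y1 - y2)*(y1 - y3)*(y2 - y3))^2.
Proof. unfold cubic_discriminant. ring. Qed.

Lemma sign_pattern_of_sum_pairs_zero (g1 g2 g3 : R) :
  g1*g2*g3 > 0 -> g1*g2 + g1*g3 + g2*g3 = 0 ->
  (0 < g1 /\ g2 < 0 /\ g3 < 0) \/ (g1 < 0 /\ 0 < g2 /\ g3 < 0) \/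
  (g1 < 0 /\ g2 < 0 /\ 0 < g3).
Proof.
intros Hp Hs.
assert (N1 : g1 <> 0) by (intro E; rewrite E in Hp; lra).
assert (N2 : g2 <> 0) by (intro E; rewrite E in Hp; lra).
assert (N3 : g3 <> 0) by (intro E; rewrite E in Hp; lra).
destruct (Rdichotomy _ _ N1) as [s1|s1]; destruct (Rdichotomy _ _ N2) as [s2|s2];
  destruct (Rdichotomy _ _ N3) as [s3|s3]; try lra.
all: exfalso.
all: first [assert (0 < g1*g2) by nra | assert (g1*g2 < 0) by nra].
all: nra.
Qed.

Lemma neg_pos_pair_of_three (g1 g2 g3 f1 f2 f3 : R) :
  g1*g2*g3 > 0 -> g1*g2 + g1*g3 + g2*g3 = 0 -> f1*f2*f3 < 0 ->
  (0 < g1 -> 0 < f1) -> (0 < g2 -> 0 < f2) -> (0 < g3 -> 0 < f3) ->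
  (g1 < 0 /\ 0 < f1) \/ (g2 < 0 /\ 0 < f2) \/ (g3 < 0 /\ 0 < f3).
Proof.
intros Hg Hs Hf H1 H2 H3.
destruct (sign_pattern_of_sum_pairs_zero g1 g2 g3 Hg Hs) as [[s1 [s2 s3]]|[[s1 [s2 s3]]|[s1 [s2 s3]]]].
- assert (H : f2*f3 < 0) by (specialize (H1 s1); nra).
  apply Rmult_neg_cases in H as [[? ?]|[? ?]]; auto.
- assert (H : f1*f3 < 0) by (specialize (H2 s2); nra).
  apply Rmult_neg_cases in H as [[? ?]|[? ?]]; auto.
- assert (H : f1*f2 < 0) by (specialize (H3 s3); nra).
  apply Rmult_neg_cases in H as [[? ?]|[? ?]]; auto.
Qed.

Definition eq_cubic (u v y : R) : R := u*v*(1 - y)*(1 - u*y*(1 - y)) - 1.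

Definition eq_cubic_deriv (u v y : R) : R := -3*u^2*v*y^2 + 4*u^2*v*y - u*v*(u + 1).

(* At an equilibrium [(u y (1 - y), y)], [1 - Det J = a * det_gap u v a y]. *)
Definition det_gap (u v a y : R) : R := 2 + a*y*eq_cubic_deriv u v y.

Definition stable_root (u v a y : R) : Prop :=
  eq_cubic u v y = 0 /\ eq_cubic_deriv u v y < 0 /\ det_gap u v a y > 0.

Lemma eq_cubic_expand (u v y : R) :
  eq_cubic u v y = - (u^2*v)*y^3 + 2*u^2*v*y^2 - u*v*(u + 1)*y + (u*v - 1).
Proof. unfold eq_cubic. ring. Qed.

Lemma positive_equilibrium_iff (u v a x y : R) :
  0 < u -> 0 < a ->
  is_positive_equilibrium u v a x y <->
  x = u*y*(1 - y) /\ eq_cubic u v y = 0 /\ 0 < y < 1.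
Proof.
intros Hu Ha.
unfold is_positive_equilibrium, is_equilibrium, kopel, eq_cubic; split.
- intros [E [Hx Hy]]. injection E as Ex Ey.
  assert (Ex' : x = u*y*(1 - y)) by (apply (Rmult_eq_reg_l a); nra).
  assert (Ey' : y = v*x*(1 - x)) by (apply (Rmult_eq_reg_l a); nra).
  subst x.
  assert (Hy1 : 0 < y*(1 - y)).
  { apply (Rmult_lt_reg_l u); [exact Hu|]. rewrite Rmult_0_r, <- Rmult_assoc. exact Hx. }
  split; [reflexivity|split; [|split; [exact Hy|nra]]].
  apply (Rmult_eq_reg_l y); nra.
- intros [Ex [HG [Hy0 Hy1]]]. subst x.
  assert (Hx : 0 < u*y*(1 - y)) by (apply Rmult_lt_0_compat; nra).
  split; [|lra].
  assert (Ey : v*(u*y*(1 - y))*(1 - u*y*(1 - y)) = y).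
  { replace (v*(u*y*(1 - y))*(1 - u*y*(1 - y)))
      with (y*(u*v*(1 - y)*(1 - u*y*(1 - y)) - 1) + y) by ring.
    rewrite HG. ring. }
  f_equal; [ring|].
  replace (a*v*(u*y*(1 - y))*(1 - u*y*(1 - y)))
    with (a*(v*(u*y*(1 - y))*(1 - u*y*(1 - y)))) by ring.
  rewrite Ey. ring.
Qed.

Lemma locally_stable_iff (u v a y : R) :
  0 < a -> a <= 1 -> 0 < y -> eq_cubic u v y = 0 ->
  locally_stable u v a (u*y*(1 - y)) y <->
  eq_cubic_deriv u v y < 0 /\ det_gap u v a y > 0.
Proof.
intros Ha Ha1 Hy HG.
set (x := u*y*(1 - y)).
assert (Jury1 : 1 - trJ u v a x y + detJ u v a x y = - (a^2*y*eq_cubic_deriv u v y)).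
{ replace (- (a^2*y*eq_cubic_deriv u v y))
    with (- (a^2*(eq_cubic u v y + y*eq_cubic_deriv u v y))) by (rewrite HG; ring).
  unfold trJ, detJ, J11, J12, J21, J22, x, eq_cubic, eq_cubic_deriv. ring. }
assert (Jury2 : 1 + trJ u v a x y + detJ u v a x y = 4*(1 - a) - a^2*y*eq_cubic_deriv u v y).
{ replace (4*(1 - a) - a^2*y*eq_cubic_deriv u v y)
    with (4*(1 - a) - a^2*(eq_cubic u v y + y*eq_cubic_deriv u v y)) by (rewrite HG; ring).
  unfold trJ, detJ, J11, J12, J21, J22, x, eq_cubic, eq_cubic_deriv. ring. }
assert (Jury3 : 1 - detJ u v a x y = a*det_gap u v a y).
{ replace (a*det_gap u v a y)
    with (a*(2 + a*eq_cubic u v y + a*y*eq_cubic_deriv u v y)) by (rewrite HG; unfold det_gap; ring).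
  unfold detJ, J11, J12, J21, J22, x, eq_cubic, eq_cubic_deriv. ring. }
unfold locally_stable. rewrite Jury1, Jury2, Jury3.
assert (0 < a^2) by nra.
split.
- intros [S1 [_ S3]]. split.
  + assert (y*eq_cubic_deriv u v y < 0) by nra. nra.
  + nra.
- intros [D S].
  assert (0 < a^2*y*(- eq_cubic_deriv u v y))
    by (apply Rmult_lt_0_compat; [apply Rmult_lt_0_compat|]; lra).
  repeat split; nra.
Qed.

Lemma eq_cubic_root_bounds (u v y : R) :
  0 < u -> 0 < v -> u*v > 1 -> eq_cubic u v y = 0 -> 0 < y < 1.
Proof.
intros Hu Hv Huv HG. unfold eq_cubic in HG. split.
- destruct (Rlt_or_le 0 y) as [Hy|Hy]; [exact Hy|exfalso].
  assert (1 <= 1 - u*y*(1 - y)) by (assert (0 <= u*((- y)*(1 - y))) by (apply Rmult_le_pos; nra); nra).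
  assert (1 <= (1 - y)*(1 - u*y*(1 - y))) by nra.
  assert (u*v*1 <= u*v*((1 - y)*(1 - u*y*(1 - y)))) by (apply Rmult_le_compat_l; nra).
  nra.
- destruct (Rlt_or_le y 1) as [Hy|Hy]; [exact Hy|exfalso].
  assert (1 <= 1 - u*y*(1 - y)) by (assert (0 <= u*(y*(y - 1))) by (apply Rmult_le_pos; nra); nra).
  assert ((1 - y)*(1 - u*y*(1 - y)) <= 0) by nra.
  assert (0 <= u*v) by nra.
  nra.
Qed.

Lemma eq_cubic_root_exists (u v : R) : u*v > 1 -> exists y, eq_cubic u v y = 0.
Proof.
intros Huv.
assert (Hc : continuity (fun y => - eq_cubic u v y)) by (unfold eq_cubic; reg).
destruct (IVT (fun y => - eq_cubic u v y) 0 1 Hc) as [y [_ Hy]];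
  [lra | unfold eq_cubic; lra | unfold eq_cubic; lra |].
exists y. lra.
Qed.

Lemma det_gap_pos (u v a y : R) :
  0 < a -> 0 < y -> 0 < eq_cubic_deriv u v y -> 0 < det_gap u v a y.
Proof.
intros Ha Hy HD. unfold det_gap.
assert (0 < a*y*eq_cubic_deriv u v y) by (repeat apply Rmult_lt_0_compat; lra).
lra.
Qed.

Lemma cubic_discriminant_eq_cubic (u v : R) :
  cubic_discriminant (- (u^2*v)) (2*u^2*v) (- (u*v*(u + 1))) (u*v - 1) = u^4*v^2*R1poly u v.
Proof. unfold cubic_discriminant, R1poly. ring. Qed.

Definition quot1 (u v y0 : R) : R := 2*u^2*v - u^2*v*y0.
Definition quot0 (u v y0 : R) : R := - (u*v*(u + 1)) + y0*quot1 u v y0.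
Definition quot (u v y0 y : R) : R := - (u^2*v)*y^2 + quot1 u v y0*y + quot0 u v y0.
Definition quot_disc (u v y0 : R) : R := quot1 u v y0^2 - 4*(- (u^2*v))*quot0 u v y0.

Lemma eq_cubic_deflate (u v y0 y : R) :
  eq_cubic u v y = (y - y0)*quot u v y0 y + eq_cubic u v y0.
Proof. unfold eq_cubic, quot, quot0, quot1. ring. Qed.

Lemma eq_cubic_deriv_quot (u v y0 : R) : eq_cubic_deriv u v y0 = quot u v y0 y0.
Proof. unfold eq_cubic_deriv, quot, quot0, quot1. ring. Qed.

Lemma R1poly_deflate (u v y0 : R) :
  eq_cubic u v y0 = 0 -> u^4*v^2*R1poly u v = quot_disc u v y0 * quot u v y0 y0^2.
Proof.
intros HG.
rewrite <- cubic_discriminant_eq_cubic.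
unfold quot_disc, quot.
rewrite <- cubic_discriminant_deflate.
rewrite eq_cubic_expand in HG.
unfold quot0, quot1 in *. f_equal; [ring | ring | lra].
Qed.

(* [gap_rem1 * y + gap_rem0] is the remainder of [(u^2 v)^2 * det_gap u v a y] modulo
   [quot u v y0 y], and [gap_norm] is the resultant of [quot] with it, i.e.
   [(-u^2 v)^5 * det_gap u v a r * det_gap u v a r'] for the complex roots r, r' of [quot]. *)
Definition gap_rem1 (u v a y0 : R) : R :=
  a*(- (u*v*(u + 1)))*(u^2*v)^2 - 3*a*(u^2*v)^2*quot0 u v y0
  - 2*a*(2*u^2*v)*quot1 u v y0*(- (u^2*v)) + 3*a*(- (u^2*v))*quot1 u v y0^2.
Definition gap_rem0 (u v a y0 : R) : R :=
  2*(u^2*v)^2 + 2*a*(2*u^2*v)*quot0 u v y0*(u^2*v)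
  + 3*a*(- (u^2*v))*quot1 u v y0*quot0 u v y0.
Definition gap_norm (u v a y0 : R) : R :=
  quot0 u v y0*gap_rem1 u v a y0^2 - quot1 u v y0*gap_rem1 u v a y0*gap_rem0 u v a y0
  - (u^2*v)*gap_rem0 u v a y0^2.

Lemma H3poly_deflate (u v a y0 : R) :
  eq_cubic u v y0 = 0 ->
  (- (u^2*v))^5 * H3poly u v a = det_gap u v a y0 * gap_norm u v a y0.
Proof.
intros HG. unfold eq_cubic in HG.
(* [G(y0) = 0] gives [v] as a rational function of [u] and [y0]. *)
set (w := (1 - y0)*(1 - u*y0*(1 - y0))) in *.
assert (Hw : u*w <> 0).
{ intro E. replace (u*v*(1 - y0)*(1 - u*y0*(1 - y0))) with (v*(u*w)) in HG by (unfold w; ring).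
  rewrite E in HG. lra. }
assert (Ev : v = / (u*w)).
{ apply (Rmult_eq_reg_l (u*w)); [|exact Hw]. rewrite Rinv_r by exact Hw.
  unfold w in *. lra. }
assert (Hu : u <> 0) by (intro E; apply Hw; rewrite E; ring).
assert (Hw1 : 1 - y0 <> 0) by (intro E; apply Hw; unfold w; rewrite E; ring).
assert (Hw2 : 1 - u*y0*(1 - y0) <> 0) by (intro E; apply Hw; unfold w; rewrite E; ring).
subst v.
unfold gap_norm, gap_rem1, gap_rem0, quot0, quot1, H3poly, det_gap, eq_cubic_deriv, w.
field. auto.
Qed.

Lemma gap_norm_nonpos (u v a y0 : R) :
  0 < u -> 0 < v -> quot_disc u v y0 < 0 -> gap_norm u v a y0 <= 0.
Proof.
intros Hu Hv Hd.
assert (Hc : - (u^2*v) < 0) by (assert (0 < u^2*v) by (apply Rmult_lt_0_compat; [apply pow_lt|]; lra); lra).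
replace (gap_norm u v a y0) with
  (- (u^2*v)*gap_rem0 u v a y0^2 + (- quot1 u v y0)*gap_rem0 u v a y0*gap_rem1 u v a y0
   + quot0 u v y0*gap_rem1 u v a y0^2) by (unfold gap_norm; ring).
apply quadratic_form_nonpos; [exact Hc|].
unfold quot_disc in Hd. lra.
Qed.

Lemma stable_root_of_R1_neg (u v a : R) :
  0 < u -> 0 < v -> 0 < a -> u*v > 1 -> R1poly u v < 0 -> H3poly u v a > 0 ->
  exists y, stable_root u v a y /\ forall y', eq_cubic u v y' = 0 -> y' = y.
Proof.
intros Hu Hv Ha Huv HR HH.
destruct (eq_cubic_root_exists u v Huv) as [y0 Hy0].
assert (Huv2 : 0 < u^2*v) by (apply Rmult_lt_0_compat; [apply pow_lt|]; lra).
assert (Hd : quot_disc u v y0 < 0).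
{ assert (HR' : u^4*v^2*R1poly u v < 0)
    by (apply Rmult_pos_neg; [apply Rmult_lt_0_compat; apply pow_lt|]; lra).
  destruct (Rlt_or_le (quot_disc u v y0) 0) as [Hd|Hd]; [exact Hd|].
  rewrite (R1poly_deflate u v y0 Hy0) in HR'.
  assert (0 <= quot u v y0 y0^2) by apply pow2_ge_0. nra. }
assert (Hquot : forall y, quot u v y0 y < 0).
{ intro y. apply quadratic_neg; [lra|exact Hd]. }
exists y0. split; [split; [exact Hy0|split]|].
- rewrite eq_cubic_deriv_quot. apply Hquot.
- assert (Hpow : (- (u^2*v))^5 < 0).
  { replace ((- (u^2*v))^5) with (- ((u^2*v)^5)) by ring.
    assert (0 < (u^2*v)^5) by (apply pow_lt; exact Huv2). lra. }
  assert (Hprod : det_gap u v a y0 * gap_norm u v a y0 < 0)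
    by (rewrite <- (H3poly_deflate u v a y0 Hy0); nra).
  assert (gap_norm u v a y0 <= 0) by (apply gap_norm_nonpos; assumption).
  nra.
- intros y Hy. rewrite (eq_cubic_deflate u v y0 y), Hy0 in Hy.
  assert (quot u v y0 y < 0) by apply Hquot.
  nra.
Qed.

Lemma vieta_of_two_roots (u v y1 y2 : R) :
  eq_cubic u v y1 = 0 -> eq_cubic u v y2 = 0 -> y1 <> y2 ->
  u^2*v*(y1*y2 + y1*(2 - y1 - y2) + y2*(2 - y1 - y2)) = u*v*(u + 1) /\
  u^2*v*(y1*y2*(2 - y1 - y2)) = u*v - 1.
Proof.
intros H1 H2 Hn.
set (al := u^2*v*(y1*y2 + y1*(2 - y1 - y2) + y2*(2 - y1 - y2)) - u*v*(u + 1)).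
set (be := u*v - 1 - u^2*v*(y1*y2*(2 - y1 - y2))).
assert (Hrem : forall y, eq_cubic u v y =
  - (u^2*v)*(y - y1)*(y - y2)*(y - (2 - y1 - y2)) + al*y + be)
  by (intro y; unfold eq_cubic, al, be; ring).
rewrite Hrem in H1, H2.
assert (Hal : al*(y1 - y2) = 0) by lra.
apply Rmult_integral in Hal as [Hal|Hal]; [|exfalso; apply Hn; lra].
rewrite Hal in H1. unfold al, be in *. lra.
Qed.

Section ThreeRoots.

Variables u v y1 y2 : R.
Local Notation y3 := (2 - y1 - y2).
Hypothesis vieta2 : u^2*v*(y1*y2 + y1*y3 + y2*y3) = u*v*(u + 1).
Hypothesis vieta3 : u^2*v*(y1*y2*y3) = u*v - 1.

Lemma eq_cubic_factor (y : R) :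
  eq_cubic u v y = - (u^2*v)*(y - y1)*(y - y2)*(y - y3).
Proof.
transitivity (- (u^2*v)*(y - y1)*(y - y2)*(y - y3)
  + (u^2*v*(y1*y2 + y1*y3 + y2*y3) - u*v*(u + 1))*y + (u*v - 1 - u^2*v*(y1*y2*y3))).
- unfold eq_cubic. ring.
- rewrite vieta2, vieta3. ring.
Qed.

Lemma eq_cubic_third_root : eq_cubic u v y3 = 0.
Proof. rewrite eq_cubic_factor. ring. Qed.

Lemma eq_cubic_deriv_factor (y : R) : eq_cubic_deriv u v y =
  - (u^2*v)*((y - y2)*(y - y3) + (y - y1)*(y - y3) + (y - y1)*(y - y2)).
Proof.
transitivity (- (u^2*v)*((y - y2)*(y - y3) + (y - y1)*(y - y3) + (y - y1)*(y - y2))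
  + (u^2*v*(y1*y2 + y1*y3 + y2*y3) - u*v*(u + 1))).
- unfold eq_cubic_deriv. ring.
- rewrite vieta2. ring.
Qed.

Lemma eq_cubic_deriv_prod :
  eq_cubic_deriv u v y1 * eq_cubic_deriv u v y2 * eq_cubic_deriv u v y3 =
  (u^2*v)^3 * ((y1 - y2)*(y1 - y3)*(y2 - y3))^2.
Proof. rewrite !eq_cubic_deriv_factor. ring. Qed.

Lemma eq_cubic_deriv_pairs :
  eq_cubic_deriv u v y1 * eq_cubic_deriv u v y2 + eq_cubic_deriv u v y1 * eq_cubic_deriv u v y3
  + eq_cubic_deriv u v y2 * eq_cubic_deriv u v y3 = 0.
Proof. rewrite !eq_cubic_deriv_factor. ring. Qed.

Lemma R1poly_three_roots :
  u^4*v^2*R1poly u v = (u^2*v)^4 * ((y1 - y2)*(y1 - y3)*(y2 - y3))^2.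
Proof.
rewrite <- cubic_discriminant_eq_cubic.
transitivity (cubic_discriminant (- (u^2*v)) (- - (u^2*v)*(y1 + y2 + y3))
  (- (u^2*v)*(y1*y2 + y1*y3 + y2*y3)) (- - (u^2*v)*(y1*y2*y3))).
- f_equal; [ring | lra | lra].
- rewrite cubic_discriminant_roots. ring.
Qed.

Hypothesis Hu : 0 < u.
Hypothesis Hv : 0 < v.

Lemma H3poly_three_roots (a : R) :
  H3poly u v a = det_gap u v a y1 * det_gap u v a y2 * det_gap u v a y3.
Proof.
(* Vieta's relations give [u] and [v] as rational functions of the roots. *)
set (e2 := y1*y2 + y1*y3 + y2*y3) in *.
set (e3 := y1*y2*y3) in *.
assert (Hu' : u*(e2 - 1) = 1) by (apply (Rmult_eq_reg_l (u*v)); nra).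
assert (Hv' : v*(u - u^2*e3) = 1) by nra.
assert (He2 : e2 - 1 <> 0) by (intro E; rewrite E in Hu'; lra).
assert (Hw : u - u^2*e3 <> 0) by (intro E; rewrite E in Hv'; lra).
assert (HW : e2 - 1 - e3 <> 0).
{ intro E. apply Hw. replace e3 with (e2 - 1) by lra.
  replace (u - u^2*(e2 - 1)) with (u*(1 - u*(e2 - 1))) by ring. rewrite Hu'. ring. }
assert (Ev : v = / (u - u^2*e3))
  by (apply (Rmult_eq_reg_l (u - u^2*e3)); [rewrite Rinv_r by exact Hw; lra | exact Hw]).
assert (Eu : u = / (e2 - 1))
  by (apply (Rmult_eq_reg_l (e2 - 1)); [rewrite Rinv_r by exact He2; lra | exact He2]).
rewrite Ev. clear Ev Hv'.
rewrite Eu in *. clear Eu Hu'.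
unfold H3poly, det_gap, eq_cubic_deriv, e2, e3 in *.
field. auto.
Qed.

Lemma eq_cubic_deriv_prod_pos :
  R1poly u v > 0 -> eq_cubic_deriv u v y1 * eq_cubic_deriv u v y2 * eq_cubic_deriv u v y3 > 0.
Proof.
intros HR.
assert (Huv2 : 0 < u^2*v) by (apply Rmult_lt_0_compat; [apply pow_lt|]; lra).
assert (Hsep : 0 < ((y1 - y2)*(y1 - y3)*(y2 - y3))^2).
{ assert (HR' : 0 < u^4*v^2*R1poly u v)
    by (repeat apply Rmult_lt_0_compat; try apply pow_lt; lra).
  rewrite R1poly_three_roots in HR'.
  assert (0 < (u^2*v)^4) by (apply pow_lt; exact Huv2).
  nra. }
rewrite eq_cubic_deriv_prod.
apply Rmult_lt_0_compat; [apply pow_lt; exact Huv2 | exact Hsep].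
Qed.

End ThreeRoots.

Lemma stable_root_unique_of_R1_pos (u v a y1 y2 : R) :
  0 < u -> 0 < v -> 0 < a -> u*v > 1 -> R1poly u v > 0 -> H3poly u v a < 0 ->
  stable_root u v a y1 -> stable_root u v a y2 -> y1 = y2.
Proof.
intros Hu Hv Ha Huv HR HH [G1 [D1 P1]] [G2 [D2 P2]].
destruct (Req_dec y1 y2) as [E|Hn]; [exact E|exfalso].
destruct (vieta_of_two_roots u v y1 y2 G1 G2 Hn) as [V2 V3].
assert (G3 := eq_cubic_third_root u v y1 y2 V2 V3).
assert (Hprod := eq_cubic_deriv_prod_pos u v y1 y2 V2 V3 Hu Hv HR).
assert (D3 : 0 < eq_cubic_deriv u v (2 - y1 - y2)).
{ assert (0 < eq_cubic_deriv u v y1 * eq_cubic_deriv u v y2) by nra. nra. }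
assert (P3 : 0 < det_gap u v a (2 - y1 - y2))
  by (apply det_gap_pos; [exact Ha | apply (eq_cubic_root_bounds u v _ Hu Hv Huv G3) | exact D3]).
rewrite (H3poly_three_roots u v y1 y2 V2 V3 Hu Hv a) in HH.
assert (0 < det_gap u v a y1 * det_gap u v a y2) by nra.
nra.
Qed.

Lemma stable_root_of_R1_pos (u v a : R) :
  0 < u -> 0 < v -> 0 < a -> u*v > 1 -> R1poly u v > 0 -> H3poly u v a < 0 ->
  exists y, stable_root u v a y.
Proof.
intros Hu Hv Ha Huv HR HH.
destruct (eq_cubic_root_exists u v Huv) as [y0 G0].
assert (Hdisc : 0 < quot_disc u v y0 * quot u v y0 y0^2).
{ rewrite <- (R1poly_deflate u v y0 G0).
  repeat apply Rmult_lt_0_compat; try apply pow_lt; lra. }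
assert (Hq0 : quot u v y0 y0 <> 0) by (intro E; rewrite E in Hdisc; lra).
assert (Hd : 0 <= quot_disc u v y0).
{ assert (0 <= quot u v y0 y0^2) by apply pow2_ge_0. nra. }
destruct (quadratic_root_exists (- (u^2*v)) (quot1 u v y0) (quot0 u v y0)) as [r Hr].
{ assert (0 < u^2*v) by (apply Rmult_lt_0_compat; [apply pow_lt|]; lra). lra. }
{ exact Hd. }
fold (quot u v y0 r) in Hr.
assert (Gr : eq_cubic u v r = 0) by (rewrite (eq_cubic_deflate u v y0 r), Hr, G0; ring).
assert (Hn : y0 <> r) by (intro E; apply Hq0; rewrite E at 2; exact Hr).
destruct (vieta_of_two_roots u v y0 r G0 Gr Hn) as [V2 V3].
assert (G3 := eq_cubic_third_root u v y0 r V2 V3).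
assert (gap_of_deriv_pos : forall y, eq_cubic u v y = 0 ->
  0 < eq_cubic_deriv u v y -> 0 < det_gap u v a y)
  by (intros y Gy; apply det_gap_pos; [exact Ha | apply (eq_cubic_root_bounds u v y Hu Hv Huv Gy)]).
destruct (neg_pos_pair_of_three _ _ _ (det_gap u v a y0) (det_gap u v a r) (det_gap u v a (2 - y0 - r))
  (eq_cubic_deriv_prod_pos u v y0 r V2 V3 Hu Hv HR) (eq_cubic_deriv_pairs u v y0 r V2)
  ltac:(rewrite <- (H3poly_three_roots u v y0 r V2 V3 Hu Hv a); exact HH)
  (gap_of_deriv_pos y0 G0) (gap_of_deriv_pos r Gr) (gap_of_deriv_pos _ G3))
  as [[D P]|[[D P]|[D P]]].
- exists y0. repeat split; assumption.
- exists r. repeat split; assumption.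
- exists (2 - y0 - r). repeat split; assumption.
Qed.

Lemma unique_stable_root (u v a : R) :
  0 < u -> 0 < v -> 0 < a ->
  ((u * v > 1 /\ R1poly u v < 0 /\ H3poly u v a > 0) \/
   (u * v > 1 /\ R1poly u v > 0 /\ H3poly u v a < 0)) ->
  exists y, stable_root u v a y /\ forall y', stable_root u v a y' -> y' = y.
Proof.
intros Hu Hv Ha [[Huv [HR HH]]|[Huv [HR HH]]].
- destruct (stable_root_of_R1_neg u v a Hu Hv Ha Huv HR HH) as [y [Hy Huniq]].
  exists y. split; [exact Hy|]. intros y' [Gy' _]. exact (Huniq y' Gy').
- destruct (stable_root_of_R1_pos u v a Hu Hv Ha Huv HR HH) as [y Hy].
  exists y. split; [exact Hy|].
  intros y' Hy'. exact (stable_root_unique_of_R1_pos u v a y' y Hu Hv Ha Huv HR HH Hy' Hy).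
Qed.

Theorem theorem3 (u v a : R) :
  0 < u -> 0 < v -> 0 < a -> a <= 1 ->
  ((u * v > 1 /\ R1poly u v < 0 /\ H3poly u v a > 0) \/
   (u * v > 1 /\ R1poly u v > 0 /\ H3poly u v a < 0)) ->
  exists x y : R,
    is_positive_equilibrium u v a x y /\ locally_stable u v a x y /\
    (forall x' y' : R,
       is_positive_equilibrium u v a x' y' -> locally_stable u v a x' y' ->
       x' = x /\ y' = y).
Proof.
intros Hu Hv Ha Ha1 Hcase.
assert (Huv : u*v > 1) by (destruct Hcase as [[H _]|[H _]]; exact H).
destruct (unique_stable_root u v a Hu Hv Ha Hcase) as [y [[Gy [Dy Py]] Huniq]].
assert (Hy := eq_cubic_root_bounds u v y Hu Hv Huv Gy).
exists (u*y*(1 - y)), y. split; [|split].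
- apply positive_equilibrium_iff; auto.
- apply locally_stable_iff; [exact Ha | exact Ha1 | apply Hy | exact Gy | split; assumption].
- intros x' y' Heq Hst.
  apply positive_equilibrium_iff in Heq as [Ex [Gy' Hy']]; [|exact Hu|exact Ha].
  subst x'.
  apply locally_stable_iff in Hst as [Dy' Py']; [|exact Ha|exact Ha1|apply Hy'|exact Gy'].
  assert (E : y' = y) by (apply Huniq; repeat split; assumption).
  subst y'. split; reflexivity.
Qed.
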